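(* Let $f:\mathbb Z^m\to\mathbb R^N$ be a discrete isothermic net, let $s:\mathbb Z^m\to\mathbb R\setminus\{0\}$ satisfy $l(M,f_{ij})/l(M,f)=s_{ij}/s$ and $l(M,f_j)/l(M,f_i)=s_j/s_i$ for every elementary quadrilateral $(f,f_i,f_{ij},f_j)$ with diagonal intersection $M$, and define the edge labelling $\alpha_i$ by $|f_i-f|^2=\alpha_i s s_i$. Then for every $u$ and $i\ne j$, $q(f,f_i,f_{ij},f_j)=\alpha_i/\alpha_j$.
   Context: Notation: for $f:\mathbb Z^m\to\mathbb R^N$, $f=f(u)$, $f_i=f(u+e_i)$, $f_{ij}=f(u+e_i+e_j)$ with $e_i$ the unit vectors, similarly for $s$. A Q-net is a map such that each elementary quadrilateral $(f,f_i,f_{ij},f_j)$ ($i\ne j$) is planar, assumed non-degenerate (distinct vertices, no three collinear, diagonals meeting in a point $M$ distinct from the vertices). Two planar quadrilaterals $(A,B,C,D)$, $(A^*,B^*,C^*,D^* )$ are dual if $A^*B^*\parallel AB$, $B^*C^*\parallel BC$, $C^*D^*\parallel CD$, $D^*A^*\parallel DA$, $A^*C^*\parallel BD$, $B^*D^*\parallel AC$. A Q-net $f$ is a discrete Koenigs net if there is a Q-net $f^*$ with every $(f^*,f^*_i,f^*_{ij},f^*_j)$ dual to $(f,f_i,f_{ij},f_j)$. A circular net is a Q-net all of whose elementary quadrilaterals have their four vertices on a circle. A discrete isothermic net is a circular net which is a discrete Koenigs net. For collinear points $P,Q$, $l(P,Q)$ is the directed (signed) length along their line. For four concircular points $a,b,c,d\in\mathbb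 R^N$, $q(a,b,c,d)=(a-b)(b-c)^{-1}(c-d)(d-a)^{-1}$, computed after identifying a $2$-plane containing them with $\mathbb C$; it is real. (Such $s$ exists and the $\alpha_i$ so defined form an edge labelling: real functions on edges parallel to the $i$-th axis taking equal values on opposite edges of every elementary square.) *)

(* Points of R^N are row vectors 'rV[R]_N over a real closed
   field R (generalising the reals); the lattice Z^m is 'I_m -> int. *)
From HB Require Import structures.
From mathcomp Require Import all_boot all_order all_algebra.
Set Implicit Arguments. Unset Strict Implicit. Unset Printing Implicit Defensive.
Import Order.TTheory GRing.Theory Num.Theory.
Local Open Scope ring_scope.

Section Defs.
Variables (R : rcfType) (N : nat).
Notation pt := 'rV[R]_N.

Definition dot (x y : pt) : R := \sum_(k < N) x 0 k * y 0 k.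
Definition norm2 (x : pt) : R := dot x x.

Definition parallel (x y : pt) : bool := (\rank (col_mx x y) <= 1)%N.
Definition collinear (A B C : pt) : bool := parallel (B - A) (C - A).
Definition coplanar (A B C D : pt) : bool :=
  (\rank (col_mx (B - A) (col_mx (C - A) (D - A))) <= 2)%N.

Definition diag_meet (A B C D M : pt) : Prop :=
  (exists t : R, M = A + t *: (C - A)) /\ (exists t : R, M = B + t *: (D - B)).

Definition nondeg_quad (A B C D : pt) : Prop :=
  [/\ coplanar A B C D,
      [&& A != B, A != C, A != D, B != C, B != D & C != D],
      [&& ~~ collinear A B C, ~~ collinear A B D, ~~ collinear A C D
        & ~~ collinear B C D] &
      (exists M, diag_meet A B C D M /\ [&& M != A, M != B, M != C & M != D])].

Definition dual_quads (A B C D As Bs Cs Ds : pt) : Prop :=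
  [/\ parallel (Bs - As) (B - A), parallel (Cs - Bs) (C - B),
      parallel (Ds - Cs) (D - C) & parallel (As - Ds) (A - D)] /\
  (parallel (Cs - As) (D - B) /\ parallel (Ds - Bs) (C - A)).

(* four points on a circle: coplanar with a centre c equidistant from them *)
Definition concircular (A B C D : pt) : Prop :=
  exists c : pt,
    (\rank (col_mx (B - A) (col_mx (C - A) (col_mx (D - A) (c - A)))) <= 2)%N /\
    [/\ norm2 (B - c) = norm2 (A - c), norm2 (C - c) = norm2 (A - c)
      & norm2 (D - c) = norm2 (A - c)].

(* directed length of Q - P along a line oriented by the unit vector e *)
Definition dlen (e P Q : pt) : R := dot (Q - P) e.

(* complex numbers as pairs of reals *)
Definition csub (z w : R * R) : R * R := (z.1 - w.1, z.2 - w.2).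
Definition cmul (z w : R * R) : R * R :=
  (z.1 * w.1 - z.2 * w.2, z.1 * w.2 + z.2 * w.1).
Definition cinv (z : R * R) : R * R :=
  (z.1 / (z.1 ^+ 2 + z.2 ^+ 2), - z.2 / (z.1 ^+ 2 + z.2 ^+ 2)).

(* an identification of the 2-plane o + span(e1,e2) with C *)
Definition orthonormal2 (e1 e2 : pt) : Prop :=
  [/\ dot e1 e1 = 1, dot e2 e2 = 1 & dot e1 e2 = 0].
Definition in_plane (o e1 e2 x : pt) : Prop :=
  x - o = dot (x - o) e1 *: e1 + dot (x - o) e2 *: e2.
Definition coordC (o e1 e2 x : pt) : R * R := (dot (x - o) e1, dot (x - o) e2).

Definition qC (a b c d : R * R) : R * R :=
  cmul (cmul (cmul (csub a b) (cinv (csub b c))) (csub c d)) (cinv (csub d a)).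
Definition q_in (o e1 e2 a b c d : pt) : R * R :=
  qC (coordC o e1 e2 a) (coordC o e1 e2 b) (coordC o e1 e2 c) (coordC o e1 e2 d).
End Defs.

Definition lat (m : nat) := 'I_m -> int.
Definition shift m (u : lat m) (i : 'I_m) : lat m :=
  fun k => u k + (((k == i) : nat)%:Z).

Section Nets.
Variables (R : rcfType) (N m : nat).
Notation pt := 'rV[R]_N.

Definition Qnet (f : lat m -> pt) : Prop :=
  forall u (i j : 'I_m), i != j ->
    nondeg_quad (f u) (f (shift u i)) (f (shift (shift u i) j)) (f (shift u j)).

Definition Koenigs (f : lat m -> pt) : Prop :=
  Qnet f /\ exists fs : lat m -> pt, Qnet fs /\
    forall u (i j : 'I_m), i != j ->
      dual_quads (f u) (f (shift u i)) (f (shift (shift u i) j)) (f (shift u j))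
                 (fs u) (fs (shift u i)) (fs (shift (shift u i) j)) (fs (shift u j)).

Definition circular_net (f : lat m -> pt) : Prop :=
  Qnet f /\ forall u (i j : 'I_m), i != j ->
    concircular (f u) (f (shift u i)) (f (shift (shift u i) j)) (f (shift u j)).

Definition isothermic (f : lat m -> pt) : Prop := circular_net f /\ Koenigs f.

Definition alpha (f : lat m -> pt) (s : lat m -> R) (i : 'I_m) (u : lat m) : R :=
  norm2 (f (shift u i) - f u) / (s u * s (shift u i)).
End Nets.

(* Write A B C D for the quadrilateral and M for the meeting point of its
   diagonals.  Then C - M = k (A - M) and D - M = mu (B - M) for scalars k, mu.
   The hypothesis on s along the diagonal BD says mu = s_j / s_i, and since the
   vertices are concircular the intersecting chords theorem (power of the
   point M) gives k |A - M|^2 = mu |B - M|^2.  Identifying the plane of the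
   quadrilateral with C and placing the origin at M, a short computation with
   complex numbers shows that q(a, b, k a, mu b) = mu |b - a|^2 / |mu b - a|^2
   whenever k |a|^2 = mu |b|^2, which is alpha_i / alpha_j. *)
From mathcomp Require Import all_boot all_order all_algebra ring.
Set Implicit Arguments. Unset Strict Implicit. Unset Printing Implicit Defensive.
Import Order.TTheory GRing.Theory Num.Theory.
Local Open Scope ring_scope.

Lemma sub_shift (V : zmodType) (x y o : V) : (x - o) - (y - o) = x - y.
Proof. by rewrite opprB addrA subrK. Qed.

Section Complex.
Variable R : rcfType.
Implicit Types (a b c d z : R * R) (k l : R).

Definition cnorm2 z : R := z.1 ^+ 2 + z.2 ^+ 2.
Definition cscale k z : R * R := (k * z.1, k * z.2).

Lemma csub_translate a b z : csub (csub a z) (csub b z) = csub a b.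
Proof. by rewrite /csub /=; congr pair; ring. Qed.

Lemma qC_translate a b c d z :
  qC (csub a z) (csub b z) (csub c z) (csub d z) = qC a b c d.
Proof. by rewrite /qC !csub_translate. Qed.

(* The cross-ratio of a, b, c = k a, d = mu b where k = l |b|^2 and
   mu = l |a|^2, i.e. k |a|^2 = mu |b|^2 (the intersecting chords relation
   for chords through 0): it is real and equal to mu |b - a|^2 / |d - a|^2. *)
Lemma qC_chords a b c d l :
  c = cscale (l * cnorm2 b) a -> d = cscale (l * cnorm2 a) b ->
  cnorm2 (csub b c) != 0 -> cnorm2 (csub d a) != 0 ->
  qC a b c d = (l * cnorm2 a * cnorm2 (csub b a) / cnorm2 (csub d a), 0).
Proof.
move=> -> ->; case: a b => [a1 a2] [b1 b2].
rewrite /qC /cmul /csub /cinv /cscale /cnorm2 /= => hbc hda.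
by congr pair; field; rewrite hbc hda.
Qed.
End Complex.

Section Euclidean.
Variables (R : rcfType) (N : nat).
Implicit Types (x y z : 'rV[R]_N) (a b : R).

Lemma dotC x y : dot x y = dot y x.
Proof. by apply: eq_bigr => i _; rewrite mulrC. Qed.

Lemma dotDl x y z : dot (x + y) z = dot x z + dot y z.
Proof. by rewrite /dot -big_split; apply: eq_bigr => i _; rewrite mxE mulrDl. Qed.

Lemma dotZl a x z : dot (a *: x) z = a * dot x z.
Proof. by rewrite /dot mulr_sumr; apply: eq_bigr => i _; rewrite mxE mulrA. Qed.

Lemma dotBl x y z : dot (x - y) z = dot x z - dot y z.
Proof. by rewrite -scaleN1r dotDl dotZl mulN1r. Qed.

Lemma dotZr a x z : dot z (a *: x) = a * dot z x.
Proof. by rewrite dotC dotZl dotC. Qed.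

Lemma dotBr x y z : dot z (x - y) = dot z x - dot z y.
Proof. by rewrite dotC dotBl !(dotC z). Qed.

Lemma norm2_ge0 x : 0 <= norm2 x.
Proof. by apply: sumr_ge0 => i _; rewrite -expr2 sqr_ge0. Qed.

Lemma norm2_eq0 x : (norm2 x == 0) = (x == 0).
Proof.
apply/eqP/eqP => [hx | ->]; last by rewrite /norm2 /dot big1 // => i _; rewrite mxE mul0r.
have sq_ge0 i : true -> 0 <= x 0 i * x 0 i by rewrite -expr2 sqr_ge0.
apply/rowP => i; apply/eqP; rewrite mxE -[_ == 0]orbb -mulf_eq0.
by rewrite (psumr_eq0P sq_ge0 hx).
Qed.

Lemma norm2Z a x : norm2 (a *: x) = a ^+ 2 * norm2 x.
Proof. by rewrite /norm2 dotZl dotZr mulrA. Qed.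

Lemma norm2B x y : norm2 (x - y) = norm2 x - 2 * dot x y + norm2 y.
Proof. by rewrite /norm2 dotBl !dotBr (dotC y x); ring. Qed.

Definition unit_vec x := (Num.sqrt (norm2 x))^-1 *: x.

Lemma norm2_unit_vec x : x != 0 -> norm2 (unit_vec x) = 1.
Proof.
rewrite -norm2_eq0 => hx.
by rewrite norm2Z exprVn sqr_sqrtr ?norm2_ge0 // mulVf.
Qed.

Lemma dot_unit_vec_neq0 x : x != 0 -> dot x (unit_vec x) != 0.
Proof.
rewrite -norm2_eq0 => hx; rewrite dotZr mulf_neq0 // invr_eq0 sqrtr_eq0 -ltNge.
by rewrite lt_def hx norm2_ge0.
Qed.

Lemma parallel_scale a b x : parallel (a *: x) (b *: x).
Proof.
rewrite /parallel; have -> : col_mx (a *: x) (b *: x) = col_mx a%:M b%:M *m x.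
  by rewrite mul_col_mx !mul_scalar_mx.
by apply: leq_trans (mxrankM_maxr _ _) (rank_leq_row _).
Qed.
End Euclidean.

Section Chords.
Variables (R : rcfType) (N : nat).
Implicit Types (A B C D M x c : 'rV[R]_N) (k mu r t : R).

Lemma chord_power x c k : k != 1 -> norm2 (k *: x - c) = norm2 (x - c) ->
  k * norm2 x = norm2 c - norm2 (x - c).
Proof.
rewrite -subr_eq0 !norm2B norm2Z dotZl => hk1 hk.
have : (k - 1) * ((k + 1) * norm2 x - 2 * dot x c) = 0.
  by rewrite -(subrr (norm2 x - 2 * dot x c + norm2 c)) -{1}hk; ring.
move/eqP; rewrite mulf_eq0 (negbTE hk1) /= => /eqP hx.
have -> : k * norm2 x = (k + 1) * norm2 x - 2 * dot x c + (2 * dot x c - norm2 x) by ring.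
by rewrite hx; ring.
Qed.

Lemma line_ratio A C M t : M = A + t *: (C - A) -> M != A ->
  exists k, C - M = k *: (A - M).
Proof.
move=> defM hMA; exists ((t - 1) / t); have ht : t != 0.
  by apply: contraNneq hMA => t0; rewrite defM t0 scale0r addr0.
have -> : A - M = (- t) *: (C - A) by rewrite defM opprD addNKr scaleNr.
rewrite scalerA (_ : _ / t * _ = 1 - t); last by field.
by rewrite defM scalerBl scale1r opprD addrA.
Qed.

(* Intersecting chords theorem: the chords AC and BD of a circle through M
   satisfy MA.MC = MB.MD, in the signed form k |MA|^2 = mu |MB|^2. *)
Lemma intersecting_chords A B C D M k mu : concircular A B C D ->
  C - M = k *: (A - M) -> D - M = mu *: (B - M) -> C != A -> D != B ->
  k * norm2 (A - M) = mu * norm2 (B - M).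
Proof.
move=> [c [_ [hB hC hD]]] defC defD hCA hDB.
have ratio_neq1 X Y r : X - M = r *: (Y - M) -> X != Y -> r != 1.
  by move=> defX; apply: contraNneq => r1; rewrite -(subrK M X) defX r1 scale1r subrK.
have shift X : X - c = (X - M) - (c - M) by rewrite sub_shift.
move: hB hC hD; rewrite !shift defC defD => hB hC hD; rewrite -hB in hD.
rewrite (chord_power (ratio_neq1 _ _ _ defC hCA) hC).
by rewrite (chord_power (ratio_neq1 _ _ _ defD hDB) hD) hB.
Qed.

(* The ratio of directed lengths along the diagonal BD determines the scalar
   relating D - M to B - M; it suffices to measure along one unit vector. *)
Lemma diagonal_ratio B D M mu r : D - M = mu *: (B - M) -> B != M ->
  (forall e, norm2 e = 1 -> parallel e (D - B) -> dlen e M D / dlen e M B = r) ->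
  mu = r.
Proof.
rewrite -subr_eq0 => defD hBM hr.
have defDB : D - B = (mu - 1) *: (B - M).
  by rewrite scalerBl scale1r -defD opprB addrA subrK.
have := hr _ (norm2_unit_vec hBM); rewrite defDB => /(_ (parallel_scale _ _ _)).
by rewrite /dlen defD dotZl mulfK // dot_unit_vec_neq0.
Qed.
End Chords.

Section PlaneCoordinates.
Variables (R : rcfType) (N : nat) (e1 e2 : 'rV[R]_N).
Implicit Types (o A B C D M X Y x y : 'rV[R]_N) (a t : R).

Definition in_span x : Prop := x = dot x e1 *: e1 + dot x e2 *: e2.

Definition crd x : R * R := (dot x e1, dot x e2).

Lemma in_spanD x y : in_span x -> in_span y -> in_span (x + y).
Proof. by move=> hx hy; rewrite /in_span !dotDl !scalerDl addrACA -hx -hy. Qed.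

Lemma in_spanZ a x : in_span x -> in_span (a *: x).
Proof. by move=> hx; rewrite /in_span !dotZl -!scalerA -scalerDr -hx. Qed.

Lemma in_spanB x y : in_span x -> in_span y -> in_span (x - y).
Proof. by move=> hx hy; rewrite -scaleN1r; apply: in_spanD => //; apply: in_spanZ. Qed.

Lemma in_plane_sub o X Y : in_plane o e1 e2 X -> in_plane o e1 e2 Y -> in_span (X - Y).
Proof. by rewrite -(sub_shift X Y o); apply: in_spanB. Qed.

Lemma in_plane_line o A C t : in_plane o e1 e2 A -> in_plane o e1 e2 C ->
  in_plane o e1 e2 (A + t *: (C - A)).
Proof.
move=> hA hC; rewrite /in_plane -/(in_span _) addrAC -(sub_shift C A o).
by apply: in_spanD => //; apply/in_spanZ/in_spanB.
Qed.

Lemma norm2_span x : in_span x -> norm2 x = cnorm2 (crd x).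
Proof. by move=> hx; rewrite /norm2 {1}hx dotDl !dotZl !(dotC _ x) -!expr2. Qed.

Lemma crd_sub X Y o : csub (crd (X - o)) (crd (Y - o)) = crd (X - Y).
Proof. by rewrite /crd /csub /= -!dotBl !sub_shift. Qed.

Lemma crdZ a x : crd (a *: x) = cscale a (crd x).
Proof. by rewrite /crd /cscale !dotZl. Qed.

Lemma q_in_shift o M A B C D :
  q_in o e1 e2 A B C D = qC (crd (A - M)) (crd (B - M)) (crd (C - M)) (crd (D - M)).
Proof. by rewrite -!(crd_sub _ M o) qC_translate. Qed.
End PlaneCoordinates.

Lemma concircular_quad_q (R : rcfType) (N : nat) (A B C D o e1 e2 : 'rV[R]_N)
    (sA sB sD : R) :
  nondeg_quad A B C D -> concircular A B C D -> sA != 0 -> sB != 0 -> sD != 0 ->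
  (forall M, diag_meet A B C D M -> forall e, norm2 e = 1 -> parallel e (D - B) ->
     dlen e M D / dlen e M B = sD / sB) ->
  in_plane o e1 e2 A -> in_plane o e1 e2 B -> in_plane o e1 e2 C -> in_plane o e1 e2 D ->
  q_in o e1 e2 A B C D = (norm2 (B - A) / (sA * sB) / (norm2 (D - A) / (sA * sD)), 0).
Proof.
case=> _ /and5P[_ hAC hAD hBC /andP[hBD _]] _ [M [[[t defMA] [r defMB]] hM]].
case/and4P: hM => hMA hMB _ _ hcirc hsA hsB hsD hs hA hB hC hD.
have hM : in_plane o e1 e2 M by rewrite defMA; apply: in_plane_line.
have [k defC] := line_ratio defMA hMA.
have [mu defD] := line_ratio defMB hMB.
have mu_s : mu = sD / sB.
  have hM_diag : diag_meet A B C D M by split; [exists t | exists r].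
  by apply: diagonal_ratio defD _ (hs M hM_diag); rewrite eq_sym.
have chords : k * norm2 (A - M) = mu * norm2 (B - M).
  by apply: intersecting_chords hcirc defC defD _ _; rewrite eq_sym.
have [l defk defmu] : exists2 l, k = l * norm2 (B - M) & mu = l * norm2 (A - M).
  have nAM : norm2 (A - M) != 0 by rewrite norm2_eq0 subr_eq0 eq_sym.
  by exists (mu / norm2 (A - M)); rewrite ?divfK // mulrAC -chords mulfK.
have crd_norm2 X Y : in_plane o e1 e2 X -> in_plane o e1 e2 Y ->
    cnorm2 (csub (crd e1 e2 (X - M)) (crd e1 e2 (Y - M))) = norm2 (X - Y).
  by move=> hX hY; rewrite crd_sub -norm2_span //; apply: in_plane_sub hX hY.
have spanAM : in_span e1 e2 (A - M) := in_plane_sub hA hM.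
have spanBM : in_span e1 e2 (B - M) := in_plane_sub hB hM.
rewrite (q_in_shift e1 e2 o M) (qC_chords (l := l)).
- congr pair; rewrite !crd_norm2 // -(norm2_span spanAM) -defmu mu_s; field.
  by rewrite hsA hsB hsD norm2_eq0 subr_eq0 eq_sym hAD.
- by rewrite defC crdZ defk (norm2_span spanBM).
- by rewrite defD crdZ defmu (norm2_span spanAM).
- by rewrite crd_norm2 // norm2_eq0 subr_eq0.
- by rewrite crd_norm2 // norm2_eq0 subr_eq0 eq_sym.
Qed.

Theorem mainTheorem16 (R : rcfType) (N m : nat)
  (f : lat m -> 'rV[R]_N) (s : lat m -> R)
  (hf : isothermic f)
  (hs0 : forall u, s u != 0)
  (hs1 : forall u (i j : 'I_m) (M : 'rV[R]_N), i != j ->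
     diag_meet (f u) (f (shift u i)) (f (shift (shift u i) j)) (f (shift u j)) M ->
     forall e : 'rV[R]_N, norm2 e = 1 ->
       parallel e (f (shift (shift u i) j) - f u) ->
       dlen e M (f (shift (shift u i) j)) / dlen e M (f u)
         = s (shift (shift u i) j) / s u)
  (hs2 : forall u (i j : 'I_m) (M : 'rV[R]_N), i != j ->
     diag_meet (f u) (f (shift u i)) (f (shift (shift u i) j)) (f (shift u j)) M ->
     forall e : 'rV[R]_N, norm2 e = 1 ->
       parallel e (f (shift u j) - f (shift u i)) ->
       dlen e M (f (shift u j)) / dlen e M (f (shift u i))
         = s (shift u j) / s (shift u i)) :
  forall u (i j : 'I_m), i != j ->
    forall o e1 e2 : 'rV[R]_N, orthonormal2 e1 e2 ->
      in_plane o e1 e2 (f u) -> in_plane o e1 e2 (f (shift u i)) ->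
      in_plane o e1 e2 (f (shift (shift u i) j)) -> in_plane o e1 e2 (f (shift u j)) ->
      q_in o e1 e2 (f u) (f (shift u i)) (f (shift (shift u i) j)) (f (shift u j))
        = (alpha f s i u / alpha f s j u, 0).
Proof.
move=> u i j hij o e1 e2 _ hA hB hC hD.
have [[hQ hcirc] _] := hf.
apply: concircular_quad_q (hQ u i j hij) (hcirc u i j hij) _ _ _ _ hA hB hC hD => //.
by move=> M hM; apply: hs2 hij hM.
Qed.
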